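(* If $(S,\sqcup,\cap)$ is an ado-semilattice, then $(S,\sqcup)$ is a left regular band and for all $a,b,c\in S$, $a\sqcup(b\cap c)=(a\sqcup b)\cap(a\sqcup c)$.
   Context: An o-semilattice is an algebra $(L,\cap,\sqcup)$ such that $(L,\cap)$ is a semilattice and, with $x\leq y$ iff $x=x\cap y$, for all $x,y,z$: (i) $x\leq x\sqcup y$; (ii) $(x\cap y)\sqcup(y\cap z)\leq y$; (iii) $x\sqcup y\leq x\sqcup(y\cap(x\sqcup y))$; (iv) $x\cap z\leq(x\cap y)\sqcup z$. It is distributive if $(a\cap d)\sqcup((b\cap d)\cap(c\cap d))=((a\cap d)\sqcup(b\cap d))\cap((a\cap d)\sqcup(c\cap d))$ for all $a,b,c,d$. An ado-semilattice is a distributive o-semilattice in which $\sqcup$ is associative. A left regular band is a set with a binary operation $\sqcup$ satisfying $a\sqcup(b\sqcup c)=(a\sqcup b)\sqcup c$, $a\sqcup a=a$, $a\sqcup b=(a\sqcup b)\sqcup a$. *)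

Section Defs.
Variable L : Type.
Variables (meet join : L -> L -> L).

Definition is_semilattice : Prop :=
  (forall x y z, meet x (meet y z) = meet (meet x y) z) /\
  (forall x y, meet x y = meet y x) /\
  (forall x, meet x x = x).

Definition sle (x y : L) : Prop := x = meet x y.

Definition is_o_semilattice : Prop :=
  is_semilattice /\
  (forall x y, sle x (join x y)) /\
  (forall x y z, sle (join (meet x y) (meet y z)) y) /\
  (forall x y, sle (join x y) (join x (meet y (join x y)))) /\
  (forall x y z, sle (meet x z) (join (meet x y) z)).

Definition is_distributive_o_semilattice : Prop :=
  is_o_semilattice /\
  forall a b c d,
    join (meet a d) (meet (meet b d) (meet c d)) =
    meet (join (meet a d) (meet b d)) (join (meet a d) (meet c d)).

Definition is_ado_semilattice : Prop :=
  is_distributive_o_semilattice /\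
  forall a b c, join a (join b c) = join (join a b) c.

End Defs.

Definition is_left_regular_band (S : Type) (op : S -> S -> S) : Prop :=
  (forall a b c, op a (op b c) = op (op a b) c) /\
  (forall a, op a a = a) /\
  (forall a b, op a b = op (op a b) a).

(* The order of an o-semilattice is the meet order, and two elements below a
   common bound [d] have their join below [d]; hence [x ⊑ y] forces
   [x ⊔ y = y], which gives idempotence, left regularity and (with
   associativity) monotonicity of [a ⊔ -].  The distributive law only speaks
   about elements below a common [d].  Applied below [a ⊔ b] it shows that
   every [t] with [a ⊑ t ⊑ a ⊔ b] equals [a ⊔ (b ⊓ t)].  For
   [t = (a ⊔ b) ⊓ (a ⊔ c)] this gives [t = a ⊔ (b ⊓ t) = a ⊔ (c ⊓ t)], and
   distributivity below [t] recombines these into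
   [t = a ⊔ ((b ⊓ t) ⊓ (c ⊓ t)) ⊑ a ⊔ (b ⊓ c)]; the reverse inequality is
   monotonicity. *)


Section OSemilattice.

Variables (S : Type) (meet join : S -> S -> S).

Local Notation "x ⊓ y" := (meet x y) (at level 40, left associativity).
Local Notation "x ⊔ y" := (join x y) (at level 50, left associativity).
Local Notation "x ⊑ y" := (sle S meet x y) (at level 70).

Hypothesis HS : is_o_semilattice S meet join.

Lemma meetA x y z : x ⊓ (y ⊓ z) = x ⊓ y ⊓ z.
Proof. destruct HS as [[A _] _]; apply A. Qed.

Lemma meetC x y : x ⊓ y = y ⊓ x.
Proof. destruct HS as [[_ [C _]] _]; apply C. Qed.

Lemma meetxx x : x ⊓ x = x.
Proof. destruct HS as [[_ [_ I]] _]; apply I. Qed.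

Lemma le_join_l x y : x ⊑ x ⊔ y.
Proof. destruct HS as [_ [H _]]; apply H. Qed.

Lemma join_meet_meet_le x y z : (x ⊓ y) ⊔ (y ⊓ z) ⊑ y.
Proof. destruct HS as [_ [_ [H _]]]; apply H. Qed.

Lemma join_le_join_meet x y : x ⊔ y ⊑ x ⊔ (y ⊓ (x ⊔ y)).
Proof. destruct HS as [_ [_ [_ [H _]]]]; apply H. Qed.

Lemma meet_le_join_meet x y z : x ⊓ z ⊑ (x ⊓ y) ⊔ z.
Proof. destruct HS as [_ [_ [_ [_ H]]]]; apply H. Qed.

Lemma le_refl x : x ⊑ x.
Proof. unfold sle; now rewrite meetxx. Qed.

Lemma le_anti x y : x ⊑ y -> y ⊑ x -> x = y.
Proof.
  unfold sle; intros Hxy Hyx.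
  transitivity (x ⊓ y); [exact Hxy |].
  now rewrite meetC, <- Hyx.
Qed.

Lemma le_trans x y z : x ⊑ y -> y ⊑ z -> x ⊑ z.
Proof.
  unfold sle; intros Hxy Hyz.
  transitivity (x ⊓ y); [exact Hxy |].
  now rewrite Hyz, meetA, <- Hxy.
Qed.

Lemma meet_le_l x y : x ⊓ y ⊑ x.
Proof. unfold sle; now rewrite (meetC x y), <- meetA, meetxx. Qed.

Lemma meet_le_r x y : x ⊓ y ⊑ y.
Proof. unfold sle; now rewrite <- meetA, meetxx. Qed.

Lemma le_meet x y z : z ⊑ x -> z ⊑ y -> z ⊑ x ⊓ y.
Proof. unfold sle; intros Hx Hy; now rewrite meetA, <- Hx. Qed.

Lemma join_le a b d : a ⊑ d -> b ⊑ d -> a ⊔ b ⊑ d.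
Proof.
  unfold sle; intros Ha Hb.
  pose proof (join_meet_meet_le a d b) as H.
  now rewrite (meetC d b), <- Ha, <- Hb in H.
Qed.

Lemma le_join_r_bounded w z x : w ⊑ x -> z ⊑ x -> z ⊑ w ⊔ z.
Proof.
  unfold sle; intros Hw Hz.
  pose proof (meet_le_join_meet x w z) as H.
  now rewrite (meetC x z), (meetC x w), <- Hz, <- Hw in H.
Qed.

Lemma join_r v w : v ⊑ w -> v ⊔ w = w.
Proof.
  intros Hvw; apply le_anti.
  - apply join_le; [exact Hvw | apply le_refl].
  - apply (le_join_r_bounded v w w); [exact Hvw | apply le_refl].
Qed.

Lemma joinxx x : x ⊔ x = x.
Proof. apply join_r, le_refl. Qed.

Lemma join_meet_join x y : x ⊔ y = x ⊔ (y ⊓ (x ⊔ y)).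
Proof.
  apply le_anti; [apply join_le_join_meet |].
  apply join_le; [apply le_join_l | apply meet_le_r].
Qed.

Lemma join_left_regular x y : x ⊔ y = x ⊔ y ⊔ x.
Proof.
  apply le_anti; [apply le_join_l |].
  apply join_le; [apply le_refl | apply le_join_l].
Qed.

Lemma left_regular_band_of_joinA :
  (forall a b c, a ⊔ (b ⊔ c) = a ⊔ b ⊔ c) -> is_left_regular_band S join.
Proof.
  intros joinA; split; [exact joinA | split; [exact joinxx | exact join_left_regular]].
Qed.

Section Distributive.

Hypothesis distr : forall a b c d,
  (a ⊓ d) ⊔ ((b ⊓ d) ⊓ (c ⊓ d)) = ((a ⊓ d) ⊔ (b ⊓ d)) ⊓ ((a ⊓ d) ⊔ (c ⊓ d)).

Lemma join_meet_distr_below a b c d :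
  a ⊑ d -> b ⊑ d -> c ⊑ d -> a ⊔ (b ⊓ c) = (a ⊔ b) ⊓ (a ⊔ c).
Proof.
  unfold sle; intros Ha Hb Hc.
  pose proof (distr a b c d) as H.
  now rewrite <- Ha, <- Hb, <- Hc in H.
Qed.

Lemma join_meet_interval a b t : a ⊑ t -> t ⊑ a ⊔ b -> t = a ⊔ (b ⊓ t).
Proof.
  intros Hat Ht.
  pose proof (join_meet_distr_below a t (b ⊓ (a ⊔ b)) (a ⊔ b)
                (le_trans _ _ _ Hat Ht) Ht (meet_le_r _ _)) as H.
  rewrite (join_r a t Hat), <- join_meet_join in H.
  rewrite (meetC b (a ⊔ b)), meetA, <- Ht, (meetC t b) in H.
  symmetry; exact H.
Qed.

Hypothesis joinA : forall a b c, a ⊔ (b ⊔ c) = a ⊔ b ⊔ c.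

Lemma join_le_join_r a v w : v ⊑ w -> a ⊔ v ⊑ a ⊔ w.
Proof.
  intros Hvw.
  rewrite <- (join_r v w Hvw), joinA.
  apply le_join_l.
Qed.

Lemma join_meet_distr a b c : a ⊔ (b ⊓ c) = (a ⊔ b) ⊓ (a ⊔ c).
Proof.
  apply le_anti.
  - apply le_meet; apply join_le_join_r; [apply meet_le_l | apply meet_le_r].
  - set (t := (a ⊔ b) ⊓ (a ⊔ c)).
    assert (Hat : a ⊑ t) by (apply le_meet; apply le_join_l).
    assert (Eb : t = a ⊔ (b ⊓ t)) by (apply join_meet_interval; [exact Hat | apply meet_le_l]).
    assert (Ec : t = a ⊔ (c ⊓ t)) by (apply join_meet_interval; [exact Hat | apply meet_le_r]).
    assert (E : t = a ⊔ ((b ⊓ t) ⊓ (c ⊓ t))).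
    { rewrite (join_meet_distr_below a (b ⊓ t) (c ⊓ t) t Hat (meet_le_r _ _) (meet_le_r _ _)).
      now rewrite <- Eb, <- Ec, meetxx. }
    rewrite E.
    apply join_le_join_r, le_meet.
    + apply (le_trans _ (b ⊓ t)); apply meet_le_l.
    + apply (le_trans _ (c ⊓ t)); [apply meet_le_r | apply meet_le_l].
Qed.

End Distributive.

End OSemilattice.

Theorem lemma3p2 (S : Type) (meet join : S -> S -> S) :
  is_ado_semilattice S meet join ->
  is_left_regular_band S join /\
  (forall a b c, join a (meet b c) = meet (join a b) (join a c)).
Proof.
  intros [[HS distr] joinA]; split.
  - exact (left_regular_band_of_joinA S meet join HS joinA).
  - intros a b c; exact (join_meet_distr S meet join HS distr joinA a b c).
Qed.
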